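(* Let $(f_n)_{n\ge 1}$ be a sequence of $\{0,1\}$-valued functions on a set $X$. Then the following are equivalent: (i) there are a natural number $N$ and a set $E\subseteq\{1,\ldots,N\}$ such that for all $i_1<\cdots<i_N<\omega$, $$\bigcap_{j\in E}f_{i_j}^{-1}(1)\cap\bigcap_{j\in\{1,\ldots,N\}\setminus E}f_{i_j}^{-1}(0)=\emptyset;$$ (ii) there is a natural number $M$ such that $\sum_{n=1}^\infty|f_n(x)-f_{n+1}(x)|\le M$ for all $x\in X$. Moreover, if $X$ is a compact metric space and each $f_n$ is continuous, then (ii) (equivalently (i)) implies that $(f_n)$ converges pointwise to a function $f$ which is a difference of bounded semi-continuous functions.
   Context: A real-valued function $F$ on a topological space $X$ is upper (resp. lower) semi-continuous if $\{x:F(x)\ge r\}$ (resp. $\{x:F(x)\le r\}$) is closed for every real $r$; it is semi-continuous if it is upper or lower semi-continuous. A function $f$ is a difference of bounded semi-continuous functions (DBSC) if $f=F_1-F_2$ for some bounded semi-continuous functions $F_1,F_2$ on $X$. *)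

From HB Require Import structures.
From mathcomp Require Import all_boot all_order all_algebra.
From mathcomp Require Import all_classical all_reals all_analysis.
Set Implicit Arguments. Unset Strict Implicit. Unset Printing Implicit Defensive.
Import Order.TTheory GRing.Theory Num.Theory.
Import numFieldNormedType.Exports.
Local Open Scope classical_set_scope.
Local Open Scope ring_scope.

Definition usc_fun (R : realType) (X : topologicalType) (F : X -> R) : Prop :=
  forall r : R, closed [set x | r <= F x].
Definition lsc_fun (R : realType) (X : topologicalType) (F : X -> R) : Prop :=
  forall r : R, closed [set x | F x <= r].
Definition semicont_fun (R : realType) (X : topologicalType) (F : X -> R) : Prop :=
  usc_fun F \/ lsc_fun F.
Definition bounded_rfun (R : realType) (X : Type) (F : X -> R) : Prop :=
  exists M : R, forall x, `|F x| <= M.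

Definition DBSC (R : realType) (X : topologicalType) (f : X -> R) : Prop :=
  exists F1 F2 : X -> R,
    [/\ bounded_rfun F1, semicont_fun F1, bounded_rfun F2, semicont_fun F2
      & forall x, f x = F1 x - F2 x].

(* Sequence of {0,1}-valued functions (indexed from 0 instead of 1). *)
Definition zero_one_seq (R : realType) (X : Type) (f : nat -> X -> R) : Prop :=
  forall n x, f n x = 0 \/ f n x = 1.

(* Condition (i); {1,...,N} is rendered as 'I_N = {0,...,N-1}. *)
Definition cond_i (R : realType) (X : Type) (f : nat -> X -> R) : Prop :=
  exists (N : nat) (E : {set 'I_N}),
    forall i : 'I_N -> nat,
      (forall j k : 'I_N, (j < k)%N -> (i j < i k)%N) ->
      \bigcap_(j in [set j | j \in E]) (f (i j) @^-1` [set 1])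
        `&` \bigcap_(j in [set j | j \notin E]) (f (i j) @^-1` [set 0]) = set0.

Definition cond_ii (R : realType) (X : Type) (f : nat -> X -> R) : Prop :=
  exists M : nat, forall x : X,
    (\sum_(0 <= n <oo) (`|f n x - f n.+1 x|)%:E <= (M%:R)%:E)%E.

From mathcomp Require Import all_boot all_order all_algebra.
From mathcomp Require Import all_classical all_reals all_analysis.
From mathcomp Require Import zify.
Import Order.TTheory GRing.Theory Num.Theory.
Import numFieldNormedType.Exports.

(* At a point x the values f_n x form a 0/1 word, and the series of (ii) counts
   its switches.  A word with 2N switches contains every 0/1 pattern of length N
   along a subsequence: pick greedily the next index carrying the required bit,
   which uses up at most two switches.  Hence (i) bounds the number of switches
   by 2N; conversely, a bound M on the switches rules out the alternating
   pattern of length M + 2.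
   For the second part write f_k = (f_0 + P_k) - N_k, where P_k and N_k are the
   partial sums of the positive and negative parts of the increments
   f_(n+1) - f_n.  Both are continuous, nondecreasing in k and bounded by the
   total variation, and a bounded nondecreasing limit of continuous functions
   is a bounded lower semi-continuous function. *)

Section Switches.
Local Open Scope nat_scope.
Variable u : nat -> bool.

Definition switches a b := \sum_(a <= n < b) (u n != u n.+1 : nat).

Lemma switches_geq a b : b <= a -> switches a b = 0.
Proof. by move=> ba; rewrite /switches big_geq. Qed.

Lemma switches_recl a b :
  a < b -> switches a b = (u a != u a.+1) + switches a.+1 b.
Proof. by move=> ab; rewrite /switches big_ltn. Qed.

Lemma switches_cat {a b c} :
  a <= b -> b <= c -> switches a c = switches a b + switches b c.
Proof. by move=> ab bc; rewrite /switches (big_cat_nat ab bc). Qed.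

Lemma switches_gt0 a b : a <= b -> u a != u b -> 0 < switches a b.
Proof.
elim: b => [|b IH]; first by rewrite leqn0 => /eqP->; rewrite eqxx.
rewrite leq_eqVlt => /predU1P[->|]; first by rewrite eqxx.
rewrite ltnS => ab uab.
rewrite /switches big_nat_recr //= -/(switches a b) addn_gt0.
by case: (eqVneq (u a) (u b)) => [<-|/(IH ab)->]; rewrite ?uab ?orbT.
Qed.

Lemma switches_alternating (i : nat -> nat) m :
  (forall j, j < m -> i j < i j.+1) ->
  (forall j, j < m -> u (i j) != u (i j.+1)) ->
  m <= switches 0 (i m).
Proof.
elim: m => // m IH inc alt.
have im : i m <= i m.+1 by apply/ltnW/inc.
rewrite (switches_cat (leq0n _) im) -{1}[m.+1]addn1.
apply: leq_add; last exact: switches_gt0 im (alt m _).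
by apply: IH => j jm; [apply: inc | apply: alt]; apply: leqW.
Qed.

Lemma switches_first_change v a b : u a != v -> 0 < switches a b ->
  exists c, [/\ a < c, u c = v & switches a b = (switches c b).+1].
Proof.
have [k kE] : exists k, b - a = k by eexists.
elim: k a kE => [|k IH] a kE uav; first by rewrite switches_geq // -subn_eq0 kE.
have ab : a < b by rewrite -subn_gt0 kE.
rewrite switches_recl //; case: (eqVneq (u a.+1) v) => [uSv|uSv].
  by exists a.+1; rewrite uSv uav add1n.
have -> : u a = u a.+1 by move: uav uSv; case: (u a) (u a.+1) (v) => [] [] [].
rewrite eqxx add0n => /(IH a.+1 _ uSv)[|c [ac ucv cE]]; first by lia.
by exists c; split=> //; apply: ltnW.
Qed.

Lemma switches_embed_pattern (p : nat -> bool) L a b :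
  2 * L <= switches a b ->
  exists i : nat -> nat, [/\ forall j, j < L -> a <= i j,
    forall j, j.+1 < L -> i j < i j.+1 & forall j, j < L -> u (i j) = p j].
Proof.
elim: L p a => [|L IH] p a sw; first by exists id.
have [c [ac ucp swc]] :
    exists c, [/\ a <= c, u c = p 0 & switches a b <= (switches c b).+1].
  case: (eqVneq (u a) (p 0)) => [uap|uap]; first by exists a.
  have [|c [/ltnW ac ucp ->]] := @switches_first_change _ _ b uap; first by lia.
  by exists c.
have cb : c < b by rewrite ltnNge; apply/negP => /switches_geq swc0; lia.
have /(IH (fun j => p j.+1)) [i [ci inc pat]] : 2 * L <= switches c.+1 b.
  move: swc; rewrite (@switches_recl c b cb).
  by have := leq_b1 (u c != u c.+1); lia.
exists (fun j => if j is j'.+1 then i j' else c); split.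
- by case=> // j jL; apply: leq_trans ac (ltnW (ci j jL)).
- by case=> [|j] jL; [apply: ci | apply: inc].
- by case=> // j jL; apply: pat.
Qed.

Lemma switches_realize_pattern N (E : {set 'I_N}) b : 2 * N <= switches 0 b ->
  exists i : 'I_N -> nat,
    (forall j k : 'I_N, j < k -> i j < i k) /\ (forall j, u (i j) = (j \in E)).
Proof.
case/(switches_embed_pattern (fun n => n \in map val (enum E))) => i [_ inc pat].
have inc_in : {in [pred n | n < N] &, {homo i : m n / m < n}}.
  apply: (@homo_ltn_in _ _ i (fun m n => m < n) ltn_trans) => [m n _ + k|m _].
    by rewrite !inE => nN /andP[_ /ltn_trans]; apply.
  exact: inc.
exists (fun j => i j); split=> [j k jk|j]; first by apply: inc_in; rewrite ?inE.
by rewrite pat // (mem_map val_inj) mem_enum.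
Qed.

Lemma bounded_switches_not_alternating M : (forall b, switches 0 b <= M) ->
  forall i : 'I_M.+2 -> nat, (forall j k : 'I_M.+2, j < k -> i j < i k) ->
  ~ (forall j, u (i j) = odd j).
Proof.
move=> bound i inc alt; pose ii n := i (inord n).
have ii_inc j : j < M.+1 -> ii j < ii j.+1.
  by move=> jM; have jM2 : j < M.+2 := ltnW jM; apply: inc; rewrite !inordK.
have ii_alt j : j < M.+1 -> u (ii j) != u (ii j.+1).
  move=> jM; have jM2 : j < M.+2 := ltnW jM.
  by rewrite /ii !alt !inordK //=; case: (odd j).
have := leq_trans (switches_alternating _ _ ii_inc ii_alt) (bound _).
by rewrite ltnn.
Qed.

End Switches.

Local Open Scope classical_set_scope.
Local Open Scope ring_scope.

Lemma nneseries_le_fin (R : realType) (u : nat -> R) (b : R) :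
  (forall n, 0 <= u n) ->
  (\sum_(0 <= n <oo) (u n)%:E <= b%:E)%E <-> forall k, \sum_(0 <= n < k) u n <= b.
Proof.
move=> u_ge0; split=> [le_b k|le_b].
  rewrite -lee_fin -sumEFin; apply: le_trans le_b.
  by apply: nneseries_lim_ge => n _ _; rewrite lee_fin.
apply: lime_le; first by apply: is_cvg_nneseries => n _ _; rewrite lee_fin.
by apply: nearW => k; rewrite sumEFin lee_fin.
Qed.

Definition bits {R : realType} {X : Type} (f : nat -> X -> R) (x : X) (n : nat) :=
  f n x == 1.

Section ZeroOneSequences.
Variables (R : realType) (X : Type) (f : nat -> X -> R).
Hypothesis f01 : zero_one_seq f.

Lemma bitsE x n : f n x = (bits f x n)%:R.
Proof. by rewrite /bits; case: (f01 n x) => ->; rewrite ?eqxx // eq_sym oner_eq0. Qed.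

Lemma dist_bitsE x n : `|f n x - f n.+1 x| = (bits f x n != bits f x n.+1)%:R.
Proof.
rewrite !bitsE; case: (bits f x n) (bits f x n.+1) => [] [];
by rewrite /= ?subrr ?subr0 ?sub0r ?normrN ?normr1 ?normr0.
Qed.

Lemma sum_dist_switches x k :
  \sum_(0 <= n < k) `|f n x - f n.+1 x| = (switches (bits f x) 0 k)%:R.
Proof. by rewrite /switches natr_sum; apply: eq_bigr => n _; rewrite dist_bitsE. Qed.

Lemma cond_iiE :
  cond_ii f <-> exists M : nat, forall x b, (switches (bits f x) 0 b <= M)%N.
Proof.
have series_leE x :=
  @nneseries_le_fin _ (fun n => `|f n x - f n.+1 x|) _ (fun n => normr_ge0 _).
split=> -[M bound]; exists M => x.
  move=> b; rewrite -(ler_nat R) -sum_dist_switches.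
  by move: b; apply/series_leE.
apply/series_leE => k.
by rewrite sum_dist_switches ler_nat.
Qed.

Lemma in_pattern_cell N (E : {set 'I_N}) (i : 'I_N -> nat) x :
  (\bigcap_(j in [set j | j \in E]) (f (i j) @^-1` [set 1])
     `&` \bigcap_(j in [set j | j \notin E]) (f (i j) @^-1` [set 0])) x <->
  forall j, bits f x (i j) = (j \in E).
Proof.
split=> [[in1 in0] j|pat].
  case: (boolP (j \in E)) => jE; rewrite /bits.
    by have -> : f (i j) x = 1 := in1 j jE; rewrite eqxx.
  by have -> : f (i j) x = 0 := in0 j jE; rewrite eq_sym oner_eq0.
split=> j /= jE; rewrite bitsE pat.
  by rewrite jE.
by rewrite (negbTE jE).
Qed.

Lemma cond_i_iff_ii : cond_i f <-> cond_ii f.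
Proof.
rewrite cond_iiE; split=> [[N [E cell0]]|[M bound]].
  exists (2 * N)%N => x b; rewrite leqNgt; apply/negP => /ltnW.
  case/(switches_realize_pattern _ _ E) => i [inc pat].
  have := cell0 i inc; apply/eqP/set0P; exists x; exact/in_pattern_cell.
exists M.+2, [set j : 'I_M.+2 | odd j]%SET => i inc.
apply/seteqP; split=> // x /in_pattern_cell pat.
by apply: (bounded_switches_not_alternating _ _ (bound x) _ inc) => j; rewrite pat inE.
Qed.

End ZeroOneSequences.

Section Variation.
Context {R : realType} {X : Type} (f : nat -> X -> R).

Definition increment n x := f n.+1 x - f n x.
Definition pos_variation k x := \sum_(0 <= n < k) (increment n)^\+ x.
Definition neg_variation k x := \sum_(0 <= n < k) (increment n)^\- x.

Lemma pos_variation_ge0 k x : 0 <= pos_variation k x.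
Proof. by apply: sumr_ge0 => n _; apply: funrpos_ge0. Qed.

Lemma neg_variation_ge0 k x : 0 <= neg_variation k x.
Proof. by apply: sumr_ge0 => n _; apply: funrneg_ge0. Qed.

Lemma nondecreasing_pos_variation x : nondecreasing_seq (pos_variation^~ x).
Proof.
by move=> m n mn; apply: nondecreasing_series mn => k _ _; apply: funrpos_ge0.
Qed.

Lemma nondecreasing_neg_variation x : nondecreasing_seq (neg_variation^~ x).
Proof.
by move=> m n mn; apply: nondecreasing_series mn => k _ _; apply: funrneg_ge0.
Qed.

Lemma variation_decomposition k x :
  f k x = f 0%N x + pos_variation k x - neg_variation k x.
Proof.
have pm n : (increment n)^\+ x - (increment n)^\- x = increment n x :=
  congr1 (@^~ x) (funrposBneg (increment n)).
rewrite -addrA -sumrB (eq_bigr _ (fun n _ => pm n)) telescope_sumr //.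
by rewrite addrC subrK.
Qed.

Lemma pos_neg_variationE k x :
  pos_variation k x + neg_variation k x = \sum_(0 <= n < k) `|f n x - f n.+1 x|.
Proof.
rewrite -big_split /=; apply: eq_bigr => n _.
have pn : (increment n)^\+ x + (increment n)^\- x = `|increment n x| :=
  congr1 (@^~ x) (funrposDneg (increment n)).
by rewrite pn distrC.
Qed.

End Variation.

Lemma continuous_partial_sum (R : realType) (X : topologicalType)
    (u : nat -> X -> R) k :
  (forall n, continuous (u n)) -> continuous (fun x => \sum_(0 <= n < k) u n x).
Proof.
by move=> u_cont; apply: (continuous_big add_continuous) => n _; apply: u_cont.
Qed.

Section MonotoneLimit.
Context {R : realType} {X : topologicalType} {h : nat -> X -> R} {B : R}.
Hypotheses (h_cont : forall k, continuous (h k))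
  (h_nd : forall x, nondecreasing_seq (h^~ x))
  (h_bound : forall k x, `|h k x| <= B).

Lemma monotone_limit_cvg x : cvgn (h^~ x).
Proof.
apply: nondecreasing_is_cvgn (h_nd x) _.
by exists B => _ [k _ <-]; apply: le_trans (ler_norm _) (h_bound k x).
Qed.

Lemma monotone_limit_ge x k : h k x <= limn (h^~ x).
Proof. exact: nondecreasing_cvgn_le (h_nd x) (monotone_limit_cvg x) k. Qed.

Lemma monotone_limit_bounded : bounded_rfun (fun x => limn (h^~ x)).
Proof.
have h_range k x : - B <= h k x <= B by rewrite -ler_norml.
exists B => x; rewrite ler_norml; apply/andP; split.
  by apply: le_trans _ (monotone_limit_ge x 0); case/andP: (h_range 0%N x).
apply: limr_le (monotone_limit_cvg x) _; apply: nearW => k.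
by case/andP: (h_range k x).
Qed.

Lemma monotone_limit_lsc : lsc_fun (fun x => limn (h^~ x)).
Proof.
move=> r; have -> : [set x | limn (h^~ x) <= r] =
    \bigcap_(k in setT) (h k @^-1` [set y | y <= r]).
  apply/seteqP; split=> x /= hxr.
    by move=> k _; apply: le_trans (monotone_limit_ge x k) hxr.
  apply: limr_le (monotone_limit_cvg x) _; apply: nearW => k; exact: hxr.
apply: closed_bigI => k _.
by move: (h_cont k) => /continuous_closedP; apply; exact: closed_le.
Qed.

End MonotoneLimit.

Lemma continuous_funrpos (R : realType) (X : topologicalType) (g : X -> R) :
  continuous g -> continuous g^\+.
Proof.
by move=> g_cont x; exact: continuous_max (g_cont x) (@cst_continuous _ _ 0 x).
Qed.

Lemma continuous_funrneg (R : realType) (X : topologicalType) (g : X -> R) :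
  continuous g -> continuous g^\-.
Proof.
move=> g_cont; rewrite -funrposN.
by apply: continuous_funrpos => x; exact: continuousN (g_cont x).
Qed.

Section ContinuousVariation.
Context {R : realType} {X : topologicalType} {f : nat -> X -> R}.
Hypothesis f_cont : forall n, continuous (f n).

Lemma continuous_increment n : continuous (increment f n).
Proof. by move=> x; apply: continuousB; apply: f_cont. Qed.

Lemma continuous_pos_variation k : continuous (pos_variation f k).
Proof.
by apply: continuous_partial_sum => n; exact/continuous_funrpos/continuous_increment.
Qed.

Lemma continuous_neg_variation k : continuous (neg_variation f k).
Proof.
by apply: continuous_partial_sum => n; exact/continuous_funrneg/continuous_increment.
Qed.

End ContinuousVariation.

Lemma bounded_variation_limit_DBSC (R : realType) (X : topologicalType)
    (f : nat -> X -> R) (C M : R) :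
  (forall n, continuous (f n)) -> (forall x, `|f 0%N x| <= C) ->
  (forall x k, \sum_(0 <= n < k) `|f n x - f n.+1 x| <= M) ->
  exists g : X -> R, (forall x, f^~ x @ \oo --> g x) /\ DBSC g.
Proof.
move=> f_cont f0_bound var_bound.
pose up k x := f 0%N x + pos_variation f k x.
pose down := neg_variation f.
have up_cont k : continuous (up k).
  by move=> x; apply: continuousD; [exact: f_cont | exact: continuous_pos_variation].
have down_cont k : continuous (down k) := continuous_neg_variation f_cont k.
have up_nd x : nondecreasing_seq (up^~ x).
  by move=> m n mn; rewrite lerD2l; apply: nondecreasing_pos_variation.
have down_nd x : nondecreasing_seq (down^~ x) := nondecreasing_neg_variation f x.
have up_bound k x : `|up k x| <= C + M.
  apply: le_trans (ler_normD _ _) (lerD (f0_bound x) _).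
  rewrite ger0_norm ?pos_variation_ge0 //; apply: le_trans (var_bound x k).
  by rewrite -pos_neg_variationE lerDl neg_variation_ge0.
have down_bound k x : `|down k x| <= M.
  rewrite ger0_norm ?neg_variation_ge0 //; apply: le_trans (var_bound x k).
  by rewrite -pos_neg_variationE lerDr pos_variation_ge0.
exists (fun x => limn (up^~ x) - limn (down^~ x)); split.
  move=> x; under eq_fun do rewrite variation_decomposition.
  exact: cvgB (monotone_limit_cvg up_nd up_bound x)
              (monotone_limit_cvg down_nd down_bound x).
exists (fun x => limn (up^~ x)), (fun x => limn (down^~ x)); split=> //.
- exact: monotone_limit_bounded up_nd up_bound.
- by right; exact: monotone_limit_lsc up_cont up_nd up_bound.
- exact: monotone_limit_bounded down_nd down_bound.
- by right; exact: monotone_limit_lsc down_cont down_nd down_bound.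
Qed.

Theorem lemma2p8 (R : realType) :
  (forall (X : Type) (f : nat -> X -> R),
      zero_one_seq f -> (cond_i f <-> cond_ii f)) /\
  (forall (X : pseudoMetricType R) (f : nat -> X -> R),
      hausdorff_space X -> compact [set: X] ->
      zero_one_seq f -> (forall n, continuous (f n)) ->
      cond_ii f ->
      exists g : X -> R,
        (forall x, (fun n => f n x) @ \oo --> g x) /\ DBSC g).
Proof.
split=> [X f f01|X f _ _ f01 f_cont [M var_bound]]; first exact: cond_i_iff_ii.
apply: (@bounded_variation_limit_DBSC _ _ f 1 M%:R f_cont) => [x|x].
  by case: (f01 0%N x) => ->; rewrite ?normr0 ?normr1.
by apply/(@nneseries_le_fin _ _ _ (fun n => normr_ge0 _)).
Qed.
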